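(* Let $i$ be an even positive integer, $n=3i\pm1$, $q=2^n$, and $s=2^{2i}-2^i+1$. Let $B_s=\{(x+1)^s+x^s:x\in\mathrm{GF}(q)\}$ and let $d$ be the inverse of $s$ modulo $2^n-1$. Then for all $\mu\in\mathrm{GF}(q)$, \[\hat f_{B_s}(\mu)=\hat f_E(\mu^d)=\sum_{x\in\mathrm{GF}(q)}(-1)^{\mathrm{Tr}(x^{2^i+1}+\mu^dx)},\] where $E=\{x\in\mathrm{GF}(q):\mathrm{Tr}(x^{2^i+1})=1\}$.
   Context: $\mathrm{Tr}$ is the absolute trace $\mathrm{GF}(2^n)\to\mathrm{GF}(2)$. For $S\subseteq\mathrm{GF}(q)$, $f_S$ is its characteristic function as a Boolean function, and $\hat f(\mu)=\sum_{x\in\mathrm{GF}(2^n)}(-1)^{f(x)+\mathrm{Tr}(\mu x)}$ is the Walsh transform. Under the hypotheses, $\gcd(s,2^n-1)=1$, so $d$ exists. *)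

(* GF(2^n) is modelled as an arbitrary finite field F with #|F| = 2^n. *)
From mathcomp Require Import all_boot all_order all_algebra all_field.
Set Implicit Arguments. Unset Strict Implicit. Unset Printing Implicit Defensive.
Import GRing.Theory.
Local Open Scope ring_scope.

(* Absolute trace GF(2^n) -> GF(2), valued in F (it lies in the prime field {0,1}). *)
Definition Tr (F : finFieldType) (n : nat) (x : F) : F :=
  \sum_(k < n) x ^+ (2 ^ k).

(* (-1)^t for t in GF(2) (embedded in F as 0 or 1), as an integer. *)
Definition sgnF (F : finFieldType) (t : F) : int := if t == 0 then 1 else -1.

Definition charf (F : finFieldType) (S : {set F}) (x : F) : bool := x \in S.

Definition walsh (F : finFieldType) (n : nat) (f : F -> bool) (mu : F) : int :=
  \sum_(x : F) sgnF ((f x)%:R + Tr n (mu * x)).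

Definition Bset (F : finFieldType) (s : nat) : {set F} :=
  [set (x + 1) ^+ s + x ^+ s | x : F].

Definition Eset (F : finFieldType) (n i : nat) : {set F} :=
  [set x : F | Tr n (x ^+ (2 ^ i + 1)) == 1].

From HB Require Import structures.
From mathcomp Require Import all_boot all_order all_algebra all_field.
From mathcomp Require Import zify ring.
Set Implicit Arguments. Unset Strict Implicit. Unset Printing Implicit Defensive.
Import Order.TTheory GRing.Theory Num.Theory.
Local Open Scope ring_scope.

(* Let e = 2^i + 1 and K = 2^(3i) + 1, so that e s = K and x |-> x^e permutes
   GF(q), and let chi x = (-1)^Tr(x).  For l in GF(q) consider the quadratic
   character sum U(l) = sum_a chi(l a^e + a^K).  Its square is q times a sum over
   the radical of the form, and an explicit identity between the Frobenius
   twists sigma^j : x |-> x^(2^(ij)) shows that the form is trivial on its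
   radical whenever Tr(l^e) = 1, so that U(l)^2 >= 2q (q is not a square).
   Comparing with Parseval gives U(l)^2 = q (1 - chi(l^e)) for every l.
   Expanding sum_l chi(l v) U(l)^2 then evaluates the character sums of
   D(x) = (x+1)^s + x^s: sum_x chi(mu D(x)) = q [mu = 0] - hat f_E(mu^d).
   A second Parseval computation shows that D is exactly 2-to-1 onto B_s,
   so hat f_{B_s}(mu) = q [mu = 0] - sum_x chi(mu D(x)) = hat f_E(mu^d). *)

(* Locked, so that [/=] after rmorphism rewrites leaves [frob] folded. *)
Fact frob_key : unit. Proof. by []. Qed.
Definition frob (R : comNzRingType) of (2 \in [pchar R])%N :=
  locked_with frob_key (fun (j : nat) (x : R) => x ^+ (2 ^ j)).

Section IteratedFrobenius.

Variables (R : comNzRingType) (pR : (2 \in [pchar R])%N).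

Local Notation fr := (frob pR).

Lemma frobE j (x : R) : fr j x = x ^+ (2 ^ j).
Proof. by rewrite /frob unlock. Qed.

Lemma frob_is_nmod_morphism j : nmod_morphism (fr j).
Proof.
split=> [|x y]; first by rewrite !frobE expr0n expn_eq0.
by rewrite !frobE exprDn_pchar // pnatX pnatE // pR.
Qed.

Lemma frob_is_monoid_morphism j : monoid_morphism (fr j).
Proof. by split=> [|x y]; rewrite !frobE ?expr1n ?exprMn. Qed.

Lemma frob0 (x : R) : fr 0 x = x.
Proof. by rewrite !frobE expr1. Qed.

Lemma frob_comp j k (x : R) : fr j (fr k x) = fr (j + k) x.
Proof. by rewrite !frobE -exprM -expnD addnC. Qed.

End IteratedFrobenius.

HB.instance Definition _ (R : comNzRingType) pR j :=
  GRing.isNmodMorphism.Build R R (@frob R pR j)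
  (frob_is_nmod_morphism pR j).
HB.instance Definition _ (R : comNzRingType) pR j :=
  GRing.isMonoidMorphism.Build R R (@frob R pR j)
  (frob_is_monoid_morphism pR j).

Lemma sqr_eq_id (R : idomainType) (v : R) : v ^+ 2 = v -> v = 0 \/ v = 1.
Proof.
move=> vv; have /eqP : v * (v - 1) = 0 by rewrite mulrBr mulr1 -expr2 vv subrr.
by rewrite mulf_eq0 subr_eq0 => /orP [] /eqP; [left | right].
Qed.

Section CharTwoFieldIdentity.

Variables (R : fieldType) (pR : (2 \in [pchar R])%N).

Definition wsum (a b c : R) : R :=
  a ^+ 5 / (b ^+ 2 * c) + a ^+ 2 * b / c + b / (a * c) + c ^+ 2 / (a * b ^+ 2)
  + 1 / (a * b ^+ 2 * c).

Lemma wsum_prod (a b c : R) : a != 0 -> b != 0 -> c != 0 ->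
  (1 + a ^+ 3 + b ^+ 3 + c ^+ 3) / (c * a ^+ 2) *
  ((1 + a ^+ 6 + b ^+ 3 + c ^+ 3) / (a ^+ 2 * b ^+ 2)) =
  wsum a b c + wsum c (a ^+ 2) (b ^+ 2).
Proof.
move=> a0 b0 c0.
set t := (b ^+ 3 + c ^+ 3 + b ^+ 3 * c ^+ 3) / (a ^+ 4 * b ^+ 2 * c).
rewrite -[RHS]addr0 -(addrr_pchar2 pR t) /wsum /t; field.
by rewrite a0 b0 c0.
Qed.

End CharTwoFieldIdentity.

Section CharTwoFiniteField.

Variables (F : finFieldType) (n : nat).
Hypothesis card_F : #|F| = (2 ^ n)%N.

Local Notation q := (#|F|%:R : int).

Lemma pchar2_F : (2 \in [pchar F])%N.
Proof. exact: (card_finPcharP card_F). Qed.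

Local Notation fr := (frob pchar2_F).

Lemma card_F_neq0 : q != 0.
Proof. by rewrite pnatr_eq0 -lt0n; apply/card_gt0P; exists 0. Qed.

Lemma addrr (x : F) : x + x = 0.
Proof. exact: (addrr_pchar2 pchar2_F). Qed.

Lemma addr_eq0_pchar2 (x y : F) : (x + y == 0) = (x == y).
Proof. by rewrite addr_eq0 (oppr_pchar2 pchar2_F). Qed.

Lemma frob_n (x : F) : fr n x = x.
Proof. by rewrite !frobE -card_F expf_card. Qed.

Lemma frobMnD m j (x : F) : fr (n * m + j) x = fr j x.
Proof.
elim: m => [|m IH]; first by rewrite muln0.
by rewrite mulnS -addnA -frob_comp IH frob_n.
Qed.

Lemma TrE (x : F) : Tr n x = \sum_(k < n) fr k x.
Proof. by apply: eq_bigr => k _; rewrite frobE. Qed.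

Lemma Tr_frob1 (x : F) : Tr n (fr 1 x) = Tr n x.
Proof.
rewrite !TrE; case: n frob_n => [|m] frob_n; first by rewrite !big_ord0.
rewrite big_ord_recr big_ord_recl /= frob_comp addn1 frob_n frob0 addrC.
by congr (_ + _); apply: eq_bigr => k _; rewrite frob_comp addn1.
Qed.

Lemma Tr_frob j (x : F) : Tr n (fr j x) = Tr n x.
Proof.
elim: j => [|j IH]; first by rewrite frob0.
by rewrite -add1n -frob_comp Tr_frob1.
Qed.

Lemma TrD (x y : F) : Tr n (x + y) = Tr n x + Tr n y.
Proof. by rewrite !TrE -big_split; apply: eq_bigr => k _; rewrite rmorphD. Qed.

Lemma Tr0 : Tr n (0 : F) = 0.
Proof. by rewrite TrE big1 // => k _; rewrite rmorph0. Qed.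

Lemma Tr_01 (x : F) : Tr n x = 0 \/ Tr n x = 1.
Proof.
apply: sqr_eq_id; have -> : Tr n x ^+ 2 = fr 1 (Tr n x) by rewrite frobE.
rewrite -[in RHS](Tr_frob1 x) !TrE rmorph_sum /=.
by apply: eq_bigr => k _; rewrite !frob_comp addnC.
Qed.

Hypothesis odd_n : odd n.

Lemma Tr1 : Tr n (1 : F) = 1.
Proof.
rewrite TrE (eq_bigr (fun _ => 1)) => [|k _]; last exact: rmorph1.
by rewrite sumr_const card_ord -(GRing.natr_mod_pchar pchar2_F) modn2 odd_n.
Qed.

Definition chi (x : F) : int := sgnF (Tr n x).

Lemma chiD (x y : F) : chi (x + y) = chi x * chi y.
Proof.
rewrite /chi /sgnF TrD; case: (Tr_01 x) => ->; case: (Tr_01 y) => ->;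
  by rewrite ?addr0 ?add0r ?addrr ?eqxx ?oner_eq0.
Qed.

Lemma chi0 : chi 0 = 1.
Proof. by rewrite /chi /sgnF Tr0 eqxx. Qed.

Lemma chi1 : chi 1 = -1.
Proof. by rewrite /chi /sgnF Tr1 oner_eq0. Qed.

Lemma sum_chi_mul (a : F) : \sum_x chi (a * x) = if a == 0 then q else 0.
Proof.
have [-> | a0] := eqVneq a 0.
  by rewrite (eq_bigr (fun _ => 1)) ?sumr_const // => x _; rewrite mul0r chi0.
set S := \sum_x _; suff : S = - S by lia.
rewrite {1}/S (reindex_inj (addIr a^-1)) /= -sumrN; apply: eq_bigr => x _.
by rewrite mulrDr divff // chiD chi1 mulrN1.
Qed.

Lemma sum_chi : \sum_x chi x = 0.
Proof.
rewrite (eq_bigr (fun x => chi (1 * x))) => [|x _]; last by rewrite mul1r.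
by rewrite sum_chi_mul oner_eq0.
Qed.

Definition csum (g h : F -> F) (l : F) : int := \sum_a chi (l * g a + h a).

Lemma sum_chi_csum_sqr (g h : F -> F) (v : F) :
  \sum_l chi (l * v) * csum g h l ^+ 2 =
  q * \sum_a \sum_b (if g a + g b == v then chi (h a + h b) else 0).
Proof.
rewrite mulr_sumr.
transitivity (\sum_l \sum_a \sum_b chi (h a + h b) * chi ((g a + g b + v) * l)).
  apply: eq_bigr => l _; rewrite expr2 /csum mulr_suml mulr_sumr.
  apply: eq_bigr => a _; rewrite !mulr_sumr; apply: eq_bigr => b _.
  by rewrite -!chiD; congr chi; ring.
rewrite exchange_big; apply: eq_bigr => a _ /=.
rewrite exchange_big mulr_sumr; apply: eq_bigr => b _ /=.
rewrite -mulr_sumr sum_chi_mul addr_eq0_pchar2.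
by case: eqP; rewrite ?mulr0 // mulrC.
Qed.

Lemma sum_csum_sqr (g h : F -> F) :
  \sum_l csum g h l ^+ 2 =
  q * \sum_a \sum_b (if g a == g b then chi (h a + h b) else 0).
Proof.
transitivity (\sum_l chi (l * 0) * csum g h l ^+ 2).
  by apply: eq_bigr => l _; rewrite mulr0 chi0 mul1r.
rewrite sum_chi_csum_sqr; congr (_ * _); apply: eq_bigr => a _.
by apply: eq_bigr => b _; rewrite addr_eq0_pchar2.
Qed.

Lemma sum_csum_sqr_inj (g h : F -> F) :
  injective g -> \sum_l csum g h l ^+ 2 = q ^+ 2.
Proof.
move=> g_inj; rewrite sum_csum_sqr expr2; congr (_ * _).
transitivity (\sum_(a : F) (1 : int)); last by rewrite sumr_const.
apply: eq_bigr => a _; rewrite (bigD1 a) //= eqxx addrr chi0 big1 ?addr0 // => b ba.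
by rewrite (inj_eq g_inj) eq_sym (negbTE ba).
Qed.

Lemma sqr_neq_card (u : int) : u ^+ 2 != q.
Proof.
apply/eqP => /(congr1 absz); rewrite abszX natz absz_nat => u2.
by have := odd_n; rewrite -(pfactorK n (isT : prime 2)) -card_F -u2 lognX oddM.
Qed.

Lemma sum_csum_sqr_fibre (D : F -> F) :
  \sum_l csum D (fun=> 0) l ^+ 2 = q * \sum_x #|[set y | D y == D x]|%:R.
Proof.
rewrite sum_csum_sqr; congr (_ * _); apply: eq_bigr => x _.
rewrite -sum1dep_card natr_sum -big_mkcond /=.
by apply: eq_big => [y | y _]; [exact: eq_sym | rewrite addr0 chi0].
Qed.

Lemma fibre_card2 (D : F -> F) :
    (forall x, D (x + 1) = D x) ->
    \sum_l csum D (fun=> 0) l ^+ 2 = 2 * q ^+ 2 ->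
  forall x, #|[set y | D y == D x]| = 2.
Proof.
move=> D1 sumD x0.
have fibre_ge2 x : (2 <= #|[set y | D y == D x]|)%N.
  have x1x : x != x + 1 by rewrite eq_sym -subr_eq0 addrAC subrr add0r oner_eq0.
  have /subset_leq_card : [set x; x + 1] \subset [set y | D y == D x].
    by apply/subsetP => y; rewrite !inE => /orP [] /eqP ->; rewrite ?D1.
  by rewrite cards2 x1x.
have sum_excess : \sum_x (#|[set y | D y == D x]|%:R - 2 : int) = 0.
  rewrite sumrB sumr_const; apply/eqP; rewrite subr_eq0.
  apply/eqP/(mulfI card_F_neq0).
  by rewrite -sum_csum_sqr_fibre sumD -[2 *+ _]mulr_natr expr2 mulrCA.
apply/eqP; rewrite -(eqr_nat int); apply/eqP/eqP; rewrite -subr_eq0; apply/eqP.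
by apply: (psumr_eq0P _ sum_excess) => // x _; rewrite subr_ge0 ler_nat fibre_ge2.
Qed.

Lemma sum_imset_2to1 (D : F -> F) (f : F -> int) :
    (forall x, #|[set y | D y == D x]| = 2) ->
  \sum_x f (D x) = 2 * \sum_(y in [set D x | x : F]) f y.
Proof.
move=> fibre2; rewrite (partition_big_imset D) mulr_sumr.
apply: eq_bigr => _ /imsetP [x _ ->].
rewrite (eq_bigr (fun=> f (D x))) => [|y /andP [_ /eqP ->] //].
rewrite sumr_const (eq_card (_ : _ =i [set y | D y == D x])) => [|y]; last first.
  by rewrite !inE.
by rewrite fibre2 mulr2n; ring.
Qed.

Lemma walsh_charf (S : {set F}) (mu : F) :
  walsh n (charf S) mu =
  (if mu == 0 then q else 0) - 2 * \sum_(y in S) chi (mu * y).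
Proof.
rewrite /walsh -sum_chi_mul mulr_sumr [\sum_(i in S) _]big_mkcond -sumrB.
apply: eq_bigr => y _.
rewrite /charf; case: (y \in S) => /=; last by rewrite add0r subr0.
by rewrite -Tr1 -TrD -/(chi _) chiD chi1; ring.
Qed.

Lemma Tr_wsum_prod (s : {rmorphism F -> F}) (a b c : F) :
    (forall x, Tr n (s x) = Tr n x) -> a != 0 -> b != 0 -> c != 0 ->
    s a = c -> s b = a ^+ 2 -> s c = b ^+ 2 ->
  Tr n ((1 + a ^+ 3 + b ^+ 3 + c ^+ 3) / (c * a ^+ 2) *
        ((1 + a ^+ 6 + b ^+ 3 + c ^+ 3) / (a ^+ 2 * b ^+ 2))) = 0.
Proof.
move=> Tr_s a0 b0 c0 sa sb sc; rewrite (wsum_prod pchar2_F) //.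
have -> : wsum c (a ^+ 2) (b ^+ 2) = s (wsum a b c).
  by rewrite /wsum !(rmorphD, rmorphM, fmorphV, rmorphXn, rmorph1) sa sb sc.
by rewrite TrD Tr_s addrr.
Qed.

Section KasamiExponent.

Variable i : nat.
Hypotheses (i_gt0 : (0 < i)%N) (i_even : ~~ odd i).
Hypothesis n_eq : (n = 3 * i + 1 \/ n = 3 * i - 1)%N.

Lemma n_gt3 : (3 < n)%N.
Proof.
have i_ge2 : (2 <= i)%N by case: i i_gt0 i_even => [|[|]].
by case: n_eq => ->; lia.
Qed.

(* [sig j] is sigma^j for sigma : x |-> x ^+ 2 ^ i;
   as sigma^n = id, sigma^-j is written [sig (n - j)]. *)
Local Notation sig j := (fr (i * j)%N).

Lemma sig_comp j k (x : F) : sig j (sig k x) = sig (j + k) x.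
Proof. by rewrite frob_comp mulnDr. Qed.

Lemma sig_addn j (x : F) : sig (n + j) x = sig j x.
Proof. by rewrite mulnDr mulnC frobMnD. Qed.

Lemma sig_n (x : F) : sig n x = x.
Proof. by have := sig_addn 0 x; rewrite addn0 muln0 frob0. Qed.

Lemma sigK j (x : F) : (j <= n)%N -> sig j (sig (n - j) x) = x.
Proof. by move=> jn; rewrite sig_comp subnKC // sig_n. Qed.

Lemma sigVK j (x : F) : (j <= n)%N -> sig (n - j) (sig j x) = x.
Proof. by move=> jn; rewrite sig_comp subnK // sig_n. Qed.

Lemma sig3_sqr (x : F) : n = (3 * i - 1)%N -> sig 3 x = x ^+ 2.
Proof.
by move=> nE; rewrite (_ : i * 3 = n * 1 + 1)%N ?frobMnD ?frobE //; lia.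
Qed.

Lemma sqr_sig3 (x : F) : n = (3 * i + 1)%N -> sig 3 x ^+ 2 = x.
Proof.
move=> nE; have -> : sig 3 x ^+ 2 = fr 1 (sig 3 x) by rewrite [fr 1 _]frobE.
by rewrite frob_comp (_ : 1 + i * 3 = n * 1 + 0)%N ?frobMnD ?frob0 //; lia.
Qed.

Lemma sig1_fixed (v : F) : sig 1 v = v -> v = 0 \/ v = 1.
Proof.
move=> v_fix; apply: sqr_eq_id.
have v3 : sig 3 v = v by rewrite -[3%N]/(1 + (1 + 1))%N -!sig_comp !v_fix.
by case: n_eq => nE; [rewrite -{1}v3 sqr_sig3 | rewrite -sig3_sqr].
Qed.

Local Notation e := (2 ^ i + 1)%N.
Local Notation K := (2 ^ (3 * i) + 1)%N.
Local Notation s := (2 ^ (2 * i) - 2 ^ i + 1)%N.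

Lemma e_mul_s : (e * s = K)%N.
Proof.
have i2 : (2 ^ (2 * i) = 2 ^ i * 2 ^ i)%N by rewrite mul2n -addnn expnD.
have i3 : (2 ^ (3 * i) = 2 ^ i * 2 ^ i * 2 ^ i)%N.
  by rewrite (_ : 3 * i = i + i + i)%N ?expnD //; lia.
rewrite i2 i3; have : (0 < 2 ^ i)%N by rewrite expn_gt0.
by case: (2 ^ i)%N => // t _; rewrite (_ : t.+1 * t.+1 - t.+1 = t.+1 * t)%N; [ring | nia].
Qed.

Lemma e_mod3 : (e %% 3 = 2)%N.
Proof.
have [m ->] : exists m, i = m.*2 by exists i./2; rewrite -[LHS]odd_double_half (negbTE i_even).
by rewrite -modnDml -mul2n expnM -modnXm exp1n.
Qed.

Lemma exp_e (x : F) : x ^+ e = x * sig 1 x.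
Proof. by rewrite exprD expr1 mulrC muln1 frobE. Qed.

Lemma exp_K (x : F) : x ^+ K = x * sig 3 x.
Proof. by rewrite exprD expr1 mulrC mulnC frobE. Qed.

Lemma exp_K_eq1 (z : F) : z ^+ K = 1 -> z ^+ 3 = 1.
Proof.
rewrite exp_K; case: n_eq => nE zK; last by rewrite -zK sig3_sqr // -exprS.
have z0 : z != 0 by apply: contra_eq_neq zK => ->; rewrite mul0r eq_sym oner_neq0.
have sig3z : sig 3 z = z^-1 by rewrite -(mulKf z0 (sig 3 z)) zK mulr1.
have := sqr_sig3 z nE; rewrite sig3z => z2.
by rewrite -[3%N]/(1 + 2)%N exprD -{1}z2 expr1 exprVn mulVf // expf_neq0.
Qed.

Lemma exp_e_eq1 (z : F) : z ^+ e = 1 -> z = 1.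
Proof.
move=> ze; have z3 : z ^+ 3 = 1 by rewrite exp_K_eq1 // -e_mul_s exprM ze expr1n.
have z2 : z ^+ 2 = 1 by rewrite -e_mod3 (expr_mod _ z3).
by rewrite -[z]expr1 -[1%N]/(3 - 2)%N expfB // z3 z2 divr1.
Qed.

Lemma exp_e_inj : injective (fun x : F => x ^+ e).
Proof.
move=> x y /= xy; have [y0 | y0] := eqVneq y 0.
  by move: xy; rewrite y0 addn1 expr0n /= => /eqP; rewrite expf_eq0 => /eqP.
suff : x / y = 1 by move/(canRL (divfK y0)); rewrite mul1r.
by apply: exp_e_eq1; rewrite exprMn exprVn xy divff // expf_neq0.
Qed.

Lemma sig_subn_comp j k (x : F) :
  (j + k <= n)%N -> sig (n - j) (sig (n - k) x) = sig (n - (j + k)) x.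
Proof.
by move=> jkn; rewrite sig_comp (_ : n - j + (n - k) = n + (n - (j + k)))%N ?sig_addn //; lia.
Qed.

Lemma Tr_sig_mul j (a y : F) :
  (j <= n)%N -> Tr n (sig j a * y) = Tr n (a * sig (n - j) y).
Proof. by move=> jn; rewrite -(Tr_frob (i * (n - j))) rmorphM /= sigVK. Qed.

Definition quad (l a : F) : F := l * a ^+ e + a ^+ K.

Definition polar (l c : F) : F :=
  l * sig 1 c + sig (n - 1) (l * c) + sig 3 c + sig (n - 3) c.

Lemma chi_quadD (l a c : F) :
  chi (quad l a + quad l (a + c)) = chi (quad l c) * chi (a * polar l c).
Proof.
have n3 := n_gt3.
rewrite -chiD /chi; congr sgnF.
have -> : quad l a + quad l (a + c) = quad l c + a * (l * sig 1 c) + sig 1 a * (l * c)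
    + a * sig 3 c + sig 3 a * c.
  rewrite /quad !exp_e !exp_K !rmorphD /=.
  by rewrite -[RHS]addr0 -(addrr (l * (a * sig 1 a) + a * sig 3 a)); ring.
rewrite /polar !mulrDr !TrD (Tr_sig_mul (j := 1)) ?(Tr_sig_mul (j := 3)) ?addrA //; lia.
Qed.

Lemma sig_subn_sig j k (x : F) :
  (j <= k <= n)%N -> sig (n - j) (sig k x) = sig (k - j) x.
Proof.
by move=> /andP [jk kn]; rewrite sig_comp (_ : n - j + k = n + (k - j))%N ?sig_addn //; lia.
Qed.

Local Notation U := (csum (fun a => a ^+ e) (fun a => a ^+ K)).

Lemma U_sqr (l : F) : U l ^+ 2 = q * \sum_(c | polar l c == 0) chi (quad l c).
Proof.
rewrite expr2 {1}/csum mulr_suml.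
transitivity (\sum_a \sum_c chi (quad l c) * chi (polar l c * a)).
  apply: eq_bigr => a _; rewrite /csum mulr_sumr (reindex_inj (addrI a)) /=.
  by apply: eq_bigr => c _; rewrite -chiD (mulrC (polar l c)) -chi_quadD.
rewrite exchange_big [in RHS]big_mkcond [RHS]mulr_sumr; apply: eq_bigr => c _ /=.
by rewrite -mulr_sumr sum_chi_mul; case: eqP; rewrite ?mulr0 // mulrC.
Qed.

Definition rad (l c : F) : F := quad l c + sig (n - 1) (c ^+ K) + sig (n - 2) (c ^+ K).

Lemma rad_sig1 (l c : F) : polar l c = 0 -> sig 1 (rad l c) = rad l c.
Proof.
have n3 := n_gt3.
have rad_sigV : sig (n - 1) (rad l c) = rad l c + c * polar l c.
  rewrite /rad /quad /polar !exp_e !exp_K !rmorphD !rmorphM /= !sigVK;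
    rewrite ?sig_subn_comp ?sig_subn_sig ?(sig_subn_comp (j := 1)); try lia.
  rewrite ?add1n ?subSS ?subn0 ?subnn muln0 frob0.
  by rewrite -[LHS]addr0 -(addrr (l * (c * sig 1 c) + c * sig 3 c)); ring.
move=> polar0; rewrite -{2}(sigK (j := 1) (rad l c)) ?rad_sigV ?polar0 ?mulr0 ?addr0 //.
by lia.
Qed.

Lemma rad_01 (l c : F) : polar l c = 0 -> rad l c = 0 \/ rad l c = 1.
Proof. by move/rad_sig1/sig1_fixed. Qed.

Lemma Tr_rad (l c : F) : Tr n (rad l c) = Tr n (quad l c).
Proof. by rewrite /rad !TrD !Tr_frob -addrA addrr addr0. Qed.

Lemma Tr_exp_e_caseA (l c : F) : n = (3 * i - 1)%N -> c != 0 ->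
    l * (c * sig 1 c) = 1 + c ^+ K + sig (n - 1) (c ^+ K) + sig (n - 2) (c ^+ K) ->
  Tr n (l * sig 1 l) = 0.
Proof.
(* With a = sigma^-2 c and b = sigma a, l and sigma l are the two factors
   in [wsum_prod]. *)
move=> nE c0 lE; have n3 := n_gt3.
set a := sig (n - 2) c; set b := sig 1 a.
have ca : c = sig 2 a by rewrite sigK //; lia.
have sb : sig 1 b = c by rewrite ca sig_comp.
have sc : sig 1 c = a ^+ 2 by rewrite ca sig_comp sig3_sqr.
have s2b : sig 2 b = a ^+ 2 by rewrite sig_comp sig3_sqr.
have s2c : sig 2 c = b ^+ 2.
  by rewrite ca sig_comp -[(2 + 2)%N]/(1 + 3)%N -sig_comp sig3_sqr // rmorphXn.
have cK : c ^+ K = c ^+ 3 by rewrite exp_K sig3_sqr // -exprS.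
have s1cK : sig (n - 1) (c ^+ K) = b ^+ 3.
  by rewrite cK rmorphXn /= ca sig_subn_sig ?subSS ?subn0 //; lia.
have s2cK : sig (n - 2) (c ^+ K) = a ^+ 3 by rewrite cK rmorphXn.
have a0 : a != 0 by rewrite fmorph_eq0.
have b0 : b != 0 by rewrite fmorph_eq0.
have lE' : l = (1 + a ^+ 3 + b ^+ 3 + c ^+ 3) / (c * a ^+ 2).
  by apply: (canRL (mulfK _)); rewrite ?mulf_neq0 ?expf_neq0 // -sc lE s1cK s2cK cK; ring.
have slE : sig 1 l = (1 + a ^+ 6 + b ^+ 3 + c ^+ 3) / (a ^+ 2 * b ^+ 2).
  rewrite lE' !(rmorphD, rmorphM, fmorphV, rmorphXn, rmorph1) /= -/b sb sc.
  by congr (_ / _); ring.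
rewrite slE lE'; apply: (Tr_wsum_prod (s := sig 2)) => //; exact: Tr_frob.
Qed.

Lemma Tr_exp_e_caseB (l c : F) : n = (3 * i + 1)%N -> c != 0 ->
    l * (c * sig 1 c) = 1 + c ^+ K + sig (n - 1) (c ^+ K) + sig (n - 2) (c ^+ K) ->
  Tr n (l * sig 1 l) = 0.
Proof.
(* Now sigma l and l are the two factors in [wsum_prod],
   for (a, b, c) = (sigma^4 c, sigma^3 c, sigma^2 c). *)
move=> nE c0 lE; have n3 := n_gt3.
have ct : c = sig 3 c ^+ 2 by rewrite sqr_sig3.
have sc : sig 1 c = sig 4 c ^+ 2 by rewrite {1}ct rmorphXn /= sig_comp.
have s5c : sig 5 c ^+ 2 = sig 2 c by rewrite -[5%N]/(3 + 2)%N -sig_comp sqr_sig3.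
have cK : c ^+ K = sig 3 c ^+ 3 by rewrite exp_K {1}ct -exprSr.
have s1cK : sig (n - 1) (c ^+ K) = sig 2 c ^+ 3.
  by rewrite cK rmorphXn /= sig_subn_sig ?subSS ?subn0 //; lia.
have s2cK : sig (n - 2) (c ^+ K) = sig 4 c ^+ 6.
  rewrite cK rmorphXn /= sig_subn_sig; last by lia.
  by rewrite ?subSS ?subn0 sc -exprM.
have lE' : l = (1 + sig 4 c ^+ 6 + sig 3 c ^+ 3 + sig 2 c ^+ 3) /
               (sig 4 c ^+ 2 * sig 3 c ^+ 2).
  apply: (canRL (mulfK _)); rewrite ?mulf_neq0 ?expf_neq0 ?fmorph_eq0 //.
  by rewrite -sc -ct (mulrC (sig 1 c)) lE s1cK s2cK cK; ring.
have slE : sig 1 l = (1 + sig 4 c ^+ 3 + sig 3 c ^+ 3 + sig 2 c ^+ 3) /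
                     (sig 2 c * sig 4 c ^+ 2).
  rewrite lE' !(rmorphD, rmorphM, fmorphV, rmorphXn, rmorph1) /= !sig_comp !add1n.
  rewrite -[6%N]/(2 * 3)%N exprM -expr2 s5c.
  by congr (_ / _); ring.
rewrite slE lE' mulrC; apply: (Tr_wsum_prod (s := sig (n - 2))); rewrite ?fmorph_eq0 //.
- exact: Tr_frob.
- by rewrite /= (@sig_subn_sig 2 4); last lia.
- by rewrite /= (@sig_subn_sig 2 3) ?sc //; lia.
- by rewrite /= sigVK -?ct //; lia.
Qed.

Lemma Tr_exp_e_rad (l c : F) : c != 0 -> rad l c = 1 -> Tr n (l ^+ e) = 0.
Proof.
move=> c0 rad1.
have lE : l * (c * sig 1 c) = 1 + c ^+ K + sig (n - 1) (c ^+ K) + sig (n - 2) (c ^+ K).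
  rewrite -exp_e -rad1 /rad /quad -[LHS]addr0.
  by rewrite -(addrr (c ^+ K + sig (n - 1) (c ^+ K) + sig (n - 2) (c ^+ K))); ring.
rewrite exp_e; case: n_eq => nE.
- exact: Tr_exp_e_caseB nE c0 lE.
- exact: Tr_exp_e_caseA nE c0 lE.
Qed.

Lemma quad0 (l : F) : quad l 0 = 0.
Proof. by rewrite /quad !expr0n !addn1 mulr0 addr0. Qed.

Lemma polar0 (l : F) : polar l 0 = 0.
Proof. by rewrite /polar !(mulr0, rmorph0, addr0). Qed.

Lemma U_sqr_ge (l : F) : Tr n (l ^+ e) = 1 -> 2 * q <= U l ^+ 2.
Proof.
move=> Tr_le.
have chi_kernel c : polar l c = 0 -> chi (quad l c) = 1.
  move=> pc; have [-> | c0] := eqVneq c 0; first by rewrite quad0 chi0.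
  rewrite /chi -Tr_rad; case: (rad_01 pc) => [-> | rad1]; first by rewrite Tr0 /sgnF eqxx.
  by move: Tr_le; rewrite (Tr_exp_e_rad c0 rad1) => /eqP; rewrite eq_sym oner_eq0.
set k := \sum_(c | (polar l c == 0) && (c != 0)) chi (quad l c).
have U_sqrE : U l ^+ 2 = q * (1 + k).
  by rewrite U_sqr (bigD1 0) ?polar0 //= quad0 chi0.
have k_ge0 : 0 <= k by apply: sumr_ge0 => c /andP [/eqP /chi_kernel -> _].
(* q = 2 ^ n with n odd is not a square, so the radical of [quad l] is nontrivial. *)
have k_neq0 : k != 0.
  by apply: contra_neq (sqr_neq_card (U l)) => k0; rewrite U_sqrE k0 addr0 mulr1.
have q_gt0 : 0 < q by rewrite lt_def card_F_neq0 ler0n.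
rewrite U_sqrE; nia.
Qed.

Lemma sum_chi_exp_e : \sum_(l : F) chi (l ^+ e) = 0.
Proof. by rewrite -[RHS]sum_chi [RHS](reindex_inj exp_e_inj). Qed.

Lemma U_sqr_val (l : F) : U l ^+ 2 = q * (1 - chi (l ^+ e)).
Proof.
pose g (m : F) : int := U m ^+ 2 - q * (1 - chi (m ^+ e)).
have g_ge0 m : 0 <= g m.
  rewrite /g subr_ge0 /chi /sgnF; case: (Tr_01 (m ^+ e)) => Trm; rewrite Trm.
    by rewrite eqxx subrr mulr0 sqr_ge0.
  by rewrite oner_eq0 opprK mulrC; apply: U_sqr_ge.
have sum_g : \sum_m g m = 0.
  rewrite /g sumrB sum_csum_sqr_inj; last exact: exp_e_inj.
  by rewrite -mulr_sumr sumrB sum_chi_exp_e sumr_const subr0 expr2 subrr.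
by apply/eqP; rewrite -subr_eq0; apply/eqP/(psumr_eq0P (fun m _ => g_ge0 m) sum_g).
Qed.

Local Notation W := (csum (fun x : F => x) (fun x => x ^+ e)).
Local Notation eroot := (invF exp_e_inj).

Lemma erootK (y : F) : eroot y ^+ e = y.
Proof. exact: (f_invF exp_e_inj). Qed.

Lemma exp_eK (a : F) : eroot (a ^+ e) = a.
Proof. exact: (invF_f exp_e_inj). Qed.

Lemma W0 : W 0 = 0.
Proof. by rewrite -[RHS]sum_chi_exp_e; apply: eq_bigr => x _; rewrite mul0r add0r. Qed.

Lemma sum_chi_eroot (v : F) :
  \sum_a chi (a ^+ K + eroot (a ^+ e + v) ^+ K) = (if v == 0 then q else 0) - W v.
Proof.
apply: (mulfI card_F_neq0).
transitivity (\sum_l chi (l * v) * U l ^+ 2).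
  rewrite sum_chi_csum_sqr; congr (_ * _); apply: eq_bigr => a _.
  rewrite (bigD1 (eroot (a ^+ e + v))) //= erootK addrA addrr add0r eqxx big1 ?addr0 //.
  move=> b b_neq; case: eqP => // abv.
  by rewrite -abv addrA addrr add0r exp_eK eqxx in b_neq.
under eq_bigr => l _ do rewrite U_sqr_val mulrCA mulrBr mulr1 -chiD (mulrC l).
by rewrite -mulr_sumr sumrB sum_chi_mul.
Qed.

Variable d : nat.
Hypothesis sd_mod : (s * d %% (2 ^ n - 1) = 1)%N.

Lemma exp_sd (x : F) : x ^+ (s * d) = x.
Proof.
have [-> | x0] := eqVneq x 0.
  by rewrite expr0n; case: (s * d)%N sd_mod => //; rewrite mod0n.
have unit_order : x ^+ (2 ^ n - 1) = 1.
  apply: (mulIf x0); rewrite mul1r -exprSr subn1 prednK ?expn_gt0 //.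
  by rewrite -card_F expf_card.
by rewrite (divn_eq (s * d) (2 ^ n - 1)) sd_mod exprD mulnC exprM unit_order expr1n mul1r.
Qed.

Lemma exp_d_inj : injective (fun x : F => x ^+ d).
Proof. by move=> x y /= xy; rewrite -(exp_sd x) -(exp_sd y) mulnC !exprM xy. Qed.

Local Notation D x := ((x + 1) ^+ s + x ^+ s).

Lemma sum_chi_D (mu : F) :
  \sum_x chi (mu * D x) = (if mu == 0 then q else 0) - W (mu ^+ d).
Proof.
have [-> | mu0] := eqVneq mu 0.
  have d_neq0 : (d == 0)%N = false by case: d sd_mod => //; rewrite muln0 mod0n.
  rewrite (eq_bigr (fun x => chi (0 * x))) => [|x _]; last by rewrite !mul0r.
  by rewrite sum_chi_mul eqxx expr0n d_neq0 W0 subr0.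
set v := mu ^+ d; have v0 : v != 0 by rewrite expf_neq0.
have mu_v : mu = v ^+ s by rewrite /v -exprM mulnC exp_sd.
have erootKs y : eroot y ^+ K = y ^+ s by rewrite -e_mul_s exprM erootK.
transitivity (\sum_a chi (a ^+ K + eroot (a ^+ e + v) ^+ K)); last first.
  by rewrite sum_chi_eroot (negbTE v0).
transitivity (\sum_y chi (eroot (y + v) ^+ K + eroot y ^+ K)).
  rewrite [RHS](reindex_inj (mulfI v0)); apply: eq_bigr => x _.
  by rewrite !erootKs mu_v mulrDr -!exprMn mulrDr mulr1.
rewrite (reindex_inj exp_e_inj); apply: eq_bigr => a _.
by rewrite exp_eK addrC.
Qed.

Lemma sum_csum_D_sqr :
  \sum_mu csum (fun x : F => D x) (fun=> 0) mu ^+ 2 = 2 * q ^+ 2.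
Proof.
have d_gt0 : (0 < d)%N by case: d sd_mod => //; rewrite muln0 mod0n.
pose A (v : F) : int := if v == 0 then q else 0.
have sumA2 : \sum_v A v ^+ 2 = q ^+ 2.
  rewrite (bigD1 0) //= big1 ?addr0 //= => [|v v0]; first by rewrite /A eqxx.
  by rewrite /A (negbTE v0) expr0n.
have sumAW : \sum_v A v * W v = 0.
  by rewrite (bigD1 0) //= W0 mulr0 big1 ?addr0 // => v v0; rewrite /A (negbTE v0) mul0r.
transitivity (\sum_v (A v - W v) ^+ 2).
  rewrite [RHS](reindex_inj exp_d_inj); apply: eq_bigr => mu _ /=.
  rewrite /csum; under eq_bigr do rewrite addr0.
  by rewrite sum_chi_D /A expf_eq0 d_gt0.
rewrite (eq_bigr _ (fun v _ => sqrrB (A v) (W v))) !big_split /= sumrN sumrMnl.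
by rewrite sumA2 sumAW sum_csum_sqr_inj //; ring.
Qed.

Lemma D_fibre_card (x : F) : #|[set y | D y == D x]| = 2.
Proof.
apply: fibre_card2 sum_csum_D_sqr x => y.
by rewrite -addrA addrr addr0 addrC.
Qed.

Lemma walsh_B (mu : F) : walsh n (charf (Bset F s)) mu = W (mu ^+ d).
Proof.
rewrite walsh_charf /Bset -(sum_imset_2to1 (fun y => chi (mu * y)) D_fibre_card).
by rewrite sum_chi_D opprB addrC subrK.
Qed.

Lemma walsh_E (v : F) : walsh n (charf (Eset F n i)) v = W v.
Proof.
apply: eq_bigr => x _; rewrite /charf /Eset inE /chi TrD addrC.
by case: (Tr_01 (x ^+ e)) => ->; rewrite ?eqxx // eq_sym oner_eq0.
Qed.

End KasamiExponent.

End CharTwoFiniteField.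

Lemma odd_3i_pm1 (i n : nat) :
  (0 < i)%N -> ~~ odd i -> (n = 3 * i + 1 \/ n = 3 * i - 1)%N -> odd n.
Proof.
move=> i_gt0 i_even; have [m im] : exists m, i = m.*2.
  by exists i./2; rewrite -[LHS]odd_double_half (negbTE i_even).
case=> ->; rewrite im; first by rewrite oddD oddM odd_double.
by rewrite oddB ?oddM ?odd_double //; rewrite im in i_gt0; lia.
Qed.

Theorem proposition17 (F : finFieldType) (n i s d : nat) :
  (0 < i)%N -> ~~ odd i ->
  (n = 3 * i + 1 \/ n = 3 * i - 1)%N ->
  #|F| = (2 ^ n)%N ->
  s = (2 ^ (2 * i) - 2 ^ i + 1)%N ->
  (s * d %% (2 ^ n - 1) = 1)%N ->
  forall mu : F,
    walsh n (charf (Bset F s)) mu = walsh n (charf (Eset F n i)) (mu ^+ d) /\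
    walsh n (charf (Eset F n i)) (mu ^+ d) =
      \sum_(x : F) sgnF (Tr n (x ^+ (2 ^ i + 1) + mu ^+ d * x)).
Proof.
move=> i_gt0 i_even n_eq card_F -> sd_mod mu.
have odd_n := odd_3i_pm1 i_gt0 i_even n_eq.
rewrite (walsh_B card_F odd_n i_gt0 i_even n_eq sd_mod) (walsh_E card_F).
by split => //; apply: eq_bigr => x _; rewrite addrC.
Qed.
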